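(* Let $N\geq 2$ and let $\Sigma$ be the one-sided shift on $\{0,1,\dots,N-1\}^{\mathbb{N}_0}$, ordered lexicographically. Then $\Sigma$ has no forbidden order patterns of length $L\leq N+1$: for every $L\leq N+1$ and every $\pi\in\mathcal{S}_L$ there is $\omega\in\{0,1,\dots,N-1\}^{\mathbb{N}_0}$ that defines $\pi$.
   Context: $\{0,1,\dots,N-1\}^{\mathbb{N}_0}$ is the set of sequences $\omega=(\omega_0,\omega_1,\dots)$ with $\omega_n\in\{0,\dots,N-1\}$, and $\Sigma(\omega_0,\omega_1,\omega_2,\dots)=(\omega_1,\omega_2,\dots)$. The lexicographic order: $\omega<\omega'$ iff $\omega_0<\omega'_0$, or there is $n\geq1$ with $\omega_k=\omega'_k$ for $k<n$ and $\omega_n<\omega'_n$. $\mathcal{S}_L$ is the set of permutations $\pi=[\pi_0,\dots,\pi_{L-1}]$ of $\{0,\dots,L-1\}$. A sequence $\omega$ defines $\pi$ if $\Sigma^{\pi_0}(\omega)<\Sigma^{\pi_1}(\omega)<\dots<\Sigma^{\pi_{L-1}}(\omega)$. A pattern $\pi\in\mathcal{S}_L$ is forbidden for $\Sigma$ if no $\omega$ defines it. *)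

From mathcomp Require Import all_boot all_order all_fingroup.
Set Implicit Arguments. Unset Strict Implicit. Unset Printing Implicit Defensive.

Definition seqN (N : nat) := nat -> 'I_N.

Definition shift {N : nat} (w : seqN N) : seqN N := fun n => w n.+1.
Definition shiftn {N : nat} (k : nat) (w : seqN N) : seqN N := iter k shift w.

Definition lex_lt {N : nat} (w w' : seqN N) : Prop :=
  exists n : nat, (forall k, k < n -> w k = w' k) /\ (w n < w' n)%N.

Definition defines {N L : nat} (w : seqN N) (pi : 'S_L) : Prop :=
  forall (i j : 'I_L), j = i.+1 :> nat ->
    lex_lt (shiftn (pi i) w) (shiftn (pi j) w).

Definition forbidden (N L : nat) (pi : 'S_L) : Prop :=
  ~ exists w : seqN N, defines w pi.

From mathcomp Require Import all_boot all_order all_fingroup.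
From mathcomp Require Import zify.
Set Implicit Arguments. Unset Strict Implicit. Unset Printing Implicit Defensive.

(* A word realises pi as soon as the letter at each position n < L increases
   with the rank pi^-1 n: consecutive shifts are then separated by their first
   letters. For L <= N the ranks themselves fit in the alphabet. For L = N + 1
   two consecutive ranks t, t + 1 have to share a letter, and the tie between
   the shifts starting at pi t and pi (t + 1) is broken by what follows them,
   the word being continued by zeros after position N. If the last position N
   has rank m with 0 < m < N, take t = m: after N there are only zeros, while
   after pi (m + 1) the nonzero letter m at position N is still to come. If
   m = 0, take t = 0, or t = 1 when pi 1 = N - 1. The case m = N reduces to
   m = 0 by complementing all letters, which reverses the lexicographic order
   and hence the pattern. *)

Section Lexicographic.
Variable N : nat.
Implicit Types (u v w : seqN N).

Lemma shiftnE k w n : shiftn k w n = w (n + k).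
Proof.
elim: k w n => [|k IH] w n; first by rewrite addn0.
by rewrite /shiftn iterSr -/(shiftn k (shift w)) IH /shift addnS.
Qed.

Lemma lex_lt_shift_head w a b :
  w a < w b -> lex_lt (shiftn a w) (shiftn b w).
Proof. by move=> lt_ab; exists 0; rewrite !shiftnE. Qed.

Lemma lex_lt_shift_succ w a b : w a = w b ->
  lex_lt (shiftn a.+1 w) (shiftn b.+1 w) -> lex_lt (shiftn a w) (shiftn b w).
Proof.
move=> eq_ab [n [eq_lt lt_n]]; exists n.+1; split; last by move: lt_n; rewrite !shiftnE !addnS.
case=> [_|k lt_kn]; first by rewrite !shiftnE.
by move: (eq_lt k lt_kn); rewrite !shiftnE !addnS.
Qed.

Lemma lex_lt_zero_suffix w a b k :
  (forall n, w (n + a) = 0 :> nat) -> w (k + b) != 0 :> nat ->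
  lex_lt (shiftn a w) (shiftn b w).
Proof.
move=> zero_a nz_k; have ex_nz : exists k, w (k + b) != 0 :> nat by exists k.
case: (ex_minnP ex_nz) => n nz_n min_n; exists n; split=> [j lt_jn|].
  apply: val_inj; rewrite !shiftnE /= zero_a; apply/esym/eqP.
  by apply: contraTT lt_jn => /min_n; rewrite -leqNgt.
by rewrite !shiftnE zero_a lt0n.
Qed.

Definition compl w : seqN N := fun n => rev_ord (w n).

Lemma shiftn_compl k w : shiftn k (compl w) = compl (shiftn k w).
Proof. by elim: k => //= k IH; rewrite /shiftn /= -/(shiftn k _) IH. Qed.

Lemma lex_lt_compl u v : lex_lt u v -> lex_lt (compl v) (compl u).
Proof.
move=> [n [eq_lt lt_n]]; exists n; split; first by move=> k /eq_lt eq_k; rewrite /compl eq_k.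
by rewrite /=; have := ltn_ord (v n); lia.
Qed.

End Lexicographic.

Definition perm_rev L (pi : 'S_L) : 'S_L := (perm (@rev_ord_inj L) * pi)%g.

Lemma perm_revE L (pi : 'S_L) i : perm_rev pi i = pi (rev_ord i).
Proof. by rewrite permM permE. Qed.

Lemma perm_revK L (pi : 'S_L) : perm_rev (perm_rev pi) = pi.
Proof. by apply/permP => i; rewrite !perm_revE rev_ordK. Qed.

Lemma defines_compl N L (w : seqN N) (pi : 'S_L) :
  defines w pi -> defines (compl w) (perm_rev pi).
Proof.
move=> def_w i j ji; rewrite !perm_revE !shiftn_compl.
apply/lex_lt_compl/def_w; rewrite /= ji; have := ltn_ord j; lia.
Qed.

Lemma defined_perm_rev N L (pi : 'S_L) :
  (exists w : seqN N, defines w (perm_rev pi)) -> exists w : seqN N, defines w pi.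
Proof. by case=> w /defines_compl; rewrite perm_revK; exists (compl w). Qed.

Section PatternWord.
Variables (N L : nat) (pi : 'S_L) (f : 'I_L -> 'I_N) (c : 'I_N).

Definition pattern_word : seqN N :=
  fun n => if insub n is Some x then f ((pi^-1)%g x) else c.

Lemma pattern_word_ord (x : 'I_L) : pattern_word x = f ((pi^-1)%g x).
Proof. by rewrite /pattern_word valK. Qed.

Lemma pattern_word_perm i : pattern_word (pi i) = f i.
Proof. by rewrite pattern_word_ord permK. Qed.

Lemma pattern_word_tail n : L <= n -> pattern_word n = c.
Proof. by move=> le_Ln; rewrite /pattern_word insubF // ltnNge le_Ln. Qed.

Lemma defines_pattern_word :
  (forall i j : 'I_L, j = i.+1 :> nat ->
     f i < f j \/ f i = f j /\
     lex_lt (shiftn (pi i).+1 pattern_word) (shiftn (pi j).+1 pattern_word)) ->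
  defines pattern_word pi.
Proof.
move=> step i j ji; have [lt_ij|[eq_ij lt_next]] := step i j ji.
  by apply: lex_lt_shift_head; rewrite !pattern_word_perm.
by apply: lex_lt_shift_succ; rewrite // !pattern_word_perm.
Qed.

End PatternWord.

Lemma defined_short N L (pi : 'S_L) : L <= N.+1 -> exists w : seqN N.+1, defines w pi.
Proof.
move=> le_LN; exists (pattern_word pi (widen_ord le_LN) ord0).
by apply: defines_pattern_word => i j ji; left; rewrite /= ji.
Qed.

Lemma unbump_ord_lt N (t : 'I_N) (i : 'I_N.+1) : unbump t i < N.
Proof. by have := ltn_ord t; have := ltn_ord i; rewrite /unbump; case: (ltnP t i); lia. Qed.

Definition merge N (t : 'I_N) (i : 'I_N.+1) : 'I_N := Ordinal (unbump_ord_lt t i).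

Lemma merge_lt N (t : 'I_N) (i j : 'I_N.+1) :
  i != t :> nat -> j = i.+1 :> nat -> merge t i < merge t j.
Proof. by move=> /eqP ne_it ji; rewrite /= /unbump; case: (ltnP t i); case: (ltnP t j); lia. Qed.

Lemma merge_eq N (t : 'I_N) (i j : 'I_N.+1) :
  i = t :> nat -> j = i.+1 :> nat -> merge t i = merge t j.
Proof. by move=> it ji; apply: val_inj; rewrite /= /unbump ji it ltnn ltnSn. Qed.

Lemma defines_merge N (pi : 'S_N.+1) (t : 'I_N) (c : 'I_N) :
  let w := pattern_word pi (merge t) c in
  (forall i j : 'I_N.+1, i = t :> nat -> j = i.+1 :> nat ->
     lex_lt (shiftn (pi i).+1 w) (shiftn (pi j).+1 w)) ->
  defines w pi.
Proof.
move=> w merged; apply: defines_pattern_word => i j ji.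
have [it|ne_it] := eqVneq (i : nat) t.
  by right; split; [apply: merge_eq | apply: merged].
by left; apply: merge_lt.
Qed.

Section LongPatterns.
Variable N : nat.
Hypothesis N_ge2 : 1 < N.
Implicit Type pi : 'S_N.+1.

Let zero : 'I_N := Ordinal (ltnW N_ge2).

Lemma pattern_word_inord pi f (c : 'I_N) p :
  p < N.+1 -> pattern_word pi f c p = f ((pi^-1)%g (inord p)).
Proof. by move=> lt_pN; rewrite -(pattern_word_ord _ _ c) inordK. Qed.

Lemma pattern_word_last pi f (c : 'I_N) :
  pattern_word pi f c N = f ((pi^-1)%g ord_max).
Proof. exact: (pattern_word_ord _ _ _ ord_max). Qed.

Lemma perm_neq_last pi j : j != (pi^-1)%g ord_max -> pi j != N :> nat.
Proof. by apply: contra_neq => last_j; rewrite -(permK pi j); congr (_ _); apply: val_inj. Qed.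

Lemma perm_inv_neq_last pi p :
  p < N -> (pi^-1)%g (inord p) != (pi^-1)%g ord_max :> nat.
Proof.
move=> lt_pN; apply/eqP => /val_inj/perm_inj/(congr1 (@nat_of_ord _)).
rewrite inordK => [p_N|]; last exact: ltnW.
by rewrite p_N ltnn in lt_pN.
Qed.

Lemma defined_last_inner pi :
  0 < (pi^-1)%g ord_max < N -> exists w : seqN N, defines w pi.
Proof.
case/andP=> m_gt0 m_ltN; set m := (pi^-1)%g ord_max in m_gt0 m_ltN *.
exists (pattern_word pi (merge (Ordinal m_ltN)) zero).
apply: defines_merge => i j im ji.
have pi_i : pi i = ord_max by rewrite (_ : i = m) ?permKV //; apply: val_inj.
have q_ltN : pi j < N.
  have j_ne_m : j != m by apply/eqP=> j_m; move: ji; rewrite j_m im /=; lia.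
  by have := perm_neq_last j_ne_m; have := ltn_ord (pi j); lia.
apply: (lex_lt_zero_suffix (k := N - (pi j).+1)) => [n|].
  by rewrite pi_i pattern_word_tail //= addnS ltnS leq_addl.
by rewrite subnK // pattern_word_last -/m /= /unbump ltnn subn0 -lt0n.
Qed.

Lemma defined_last_least_penult pi :
  (pi^-1)%g ord_max = ord0 -> pi (inord 1) = N.-1 :> nat ->
  exists w : seqN N, defines w pi.
Proof.
move=> last_least penult; exists (pattern_word pi (merge (Ordinal N_ge2)) zero).
apply: defines_merge => i j i1 ji.
have i_eq : i = inord 1 by apply: val_inj; rewrite /= inordK ?i1 //; lia.
have pj_ne_penult : pi j != N.-1 :> nat.
  by rewrite -penult -i_eq; apply/eqP => /val_inj/perm_inj j_i; move: ji; rewrite j_i; lia.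
have pj_ne_last : pi j != N :> nat by apply: perm_neq_last; rewrite last_least -val_eqE /= ji.
have q_lt : (pi j).+1 < N by have := ltn_ord (pi j); lia.
apply: (lex_lt_zero_suffix (k := 0)) => [[|n]|].
- by rewrite i_eq penult prednK ?pattern_word_last ?last_least //; lia.
- by rewrite pattern_word_tail // i_eq penult; lia.
- rewrite add0n pattern_word_inord /= /unbump; last exact: ltnW.
  have := perm_inv_neq_last pi q_lt; rewrite last_least /=.
  by case: (ltnP 1 ((pi^-1)%g _)) => /=; lia.
Qed.

Lemma defined_last_least pi :
  (pi^-1)%g ord_max = ord0 -> exists w : seqN N, defines w pi.
Proof.
move=> last_least; have [|second_ne] := eqVneq (pi (inord 1) : nat) N.-1.
  exact: defined_last_least_penult.
exists (pattern_word pi (merge zero) zero).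
apply: defines_merge => i j i0 ji.
have {i0}i_eq : i = ord0 by apply: val_inj; exact: i0.
rewrite i_eq /= in ji.
have pi_i : pi i = ord_max by rewrite i_eq -last_least permKV.
have j_eq : j = inord 1 by apply: val_inj; rewrite /= inordK; lia.
have pj_ne_last : pi j != N :> nat by apply: perm_neq_last; rewrite last_least -val_eqE /= ji.
have q_lt : (pi j).+1 < N by move: second_ne; rewrite -j_eq; have := ltn_ord (pi j); lia.
apply: (lex_lt_zero_suffix (k := 0)) => [n|].
  by rewrite pi_i pattern_word_tail //= addnS ltnS leq_addl.
have rank_ne_j : (pi^-1)%g (inord (pi j).+1) != j :> nat.
  apply/eqP => /val_inj/(congr1 pi); rewrite permKV => /(congr1 (@nat_of_ord _)).
  by rewrite inordK; lia.
rewrite add0n pattern_word_inord /= /unbump; last exact: ltnW.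
have := perm_inv_neq_last pi q_lt; rewrite last_least /=.
by case: (ltnP 0 ((pi^-1)%g _)) => /=; lia.
Qed.

Lemma defined_last_greatest pi :
  (pi^-1)%g ord_max = ord_max -> exists w : seqN N, defines w pi.
Proof.
move=> last_greatest; apply/defined_perm_rev/defined_last_least.
have pi_last : pi ord_max = ord_max by rewrite -{1}last_greatest permKV.
have rev_ord0 : rev_ord (@ord0 N) = ord_max by apply: val_inj; rewrite /= subn1.
by rewrite -[ord0](permK (perm_rev pi)) perm_revE rev_ord0 pi_last.
Qed.

Lemma defined_long pi : exists w : seqN N, defines w pi.
Proof.
have := ltn_ord ((pi^-1)%g ord_max); rewrite ltnS leq_eqVlt.
case/predU1P=> [last_greatest|lt_mN]; first by apply/defined_last_greatest/val_inj.
have [m_eq0|m_gt0] := posnP ((pi^-1)%g ord_max); first by apply/defined_last_least/val_inj.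
by apply: defined_last_inner; rewrite m_gt0 lt_mN.
Qed.

End LongPatterns.

Theorem proposition3 (N : nat) (HN : (2 <= N)%N) (L : nat) (HL : (L <= N.+1)%N)
  (pi : 'S_L) : exists w : seqN N, defines w pi.
Proof.
case: N HN HL => [//|N] HN HL.
have [le_LN|gt_LN] := leqP L N.+1; first exact: defined_short.
have eq_L : L = N.+2 by apply/eqP; rewrite eqn_leq HL.
by subst L; apply: defined_long.
Qed.
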